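(* Let $(E,\mathcal{E},\nu)$ be a $\sigma$-finite measure space, let $\phi$ be a Young function satisfying the $\Delta_2$-condition, let $w$ be a weight function, and let $\Psi:E\to E$ be a non-singular measurable transformation such that the composition operator $C_\Psi f=f\circ\Psi$ acts on the Orlicz-Lorentz space $L_{(\phi,w)}$. For an integer $m\ge 0$ let $f_{\Psi^m}=\frac{d(\nu\circ\Psi^{-m})}{d\nu}$ and $E_m=\{x\in E: f_{\Psi^m}(x)=0\}$. Then for every $m\ge 0$, $$\mathcal{N}(C_\Psi^m)=L_{(\phi,w)}(E_m),$$ i.e. the kernel of $C_\Psi^m$ consists exactly of those $f\in L_{(\phi,w)}$ with $f(x)=0$ for (almost every) $x\in E\setminus E_m$.
   Context: A Young function is a convex $\phi:[0,\infty)\to[0,\infty)$ with $\phi(x)=0\iff x=0$ and $\lim_{x\to\infty}\phi(x)=\infty$; it satisfies the $\Delta_2$-condition if $\phi(2x)\le k\phi(x)$ for some $k>0$ and all $x>0$. A weight function is a non-increasing locally integrable $w:(0,\infty)\to(0,\infty)$ with $\int_0^\infty w(t)\,dt=\infty$. For measurable $f:E\to\mathbb{C}$, $\nu_f(s)=\nu\{x:|f(x)|>s\}$ and $f^*(t)=\inf\{s>0:\nu_f(s)\le t\}$. The Orlicz-Lorentz space $L_{(\phi,w)}$ is the space of measurable $f$ with $\int_0^\infty\phi(\alpha f^*(t))w(t)\,dt<\infty$ for some $\alpha>0$, normed by $\|f\|=\inf\{\epsilon>0:\int_0^\infty\phi(f^*(t)/\epsilon)w(t)\,dt\le1\}$.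 $\Psi$ is non-singular if $\nu(\Psi^{-1}(S))=0$ whenever $\nu(S)=0$; then each $\Psi^m$ is non-singular and $\nu_m:=\nu\circ\Psi^{-m}$ is absolutely continuous with respect to $\nu$, with Radon–Nikodym derivative $f_{\Psi^m}$ ($\Psi^0$ is the identity). $C_\Psi^m f=f\circ\Psi^m$. For $A\in\mathcal{E}$, $L_{(\phi,w)}(A)$ denotes the set of $f\in L_{(\phi,w)}$ vanishing (a.e.) outside $A$. $\mathcal{N}(T)$ denotes the kernel of $T$. *)

From HB Require Import structures.
From mathcomp Require Import all_boot all_order all_algebra.
From mathcomp Require Import all_classical all_reals all_analysis.
From mathcomp Require Import measurable_realfun.
From mathcomp Require Import complex.
Set Implicit Arguments. Unset Strict Implicit. Unset Printing Implicit Defensive.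
Import Order.TTheory GRing.Theory Num.Theory.
Local Open Scope classical_set_scope.
Local Open Scope ring_scope.

Section OrliczLorentz.
Variable R : realType.

Definition cmod (z : R[i]) : R := Num.sqrt (complex.Re z ^+ 2 + complex.Im z ^+ 2).

(* Young function phi : [0,oo) -> [0,oo) (values on negative reals are irrelevant) *)
Definition young_function (phi : R -> R) : Prop :=
  [/\ (forall x y t, 0 <= x -> 0 <= y -> 0 <= t <= 1 ->
         phi (t * x + (1 - t) * y) <= t * phi x + (1 - t) * phi y),
      (forall x, 0 <= x -> 0 <= phi x),
      (forall x, 0 <= x -> (phi x = 0 <-> x = 0)) &
      (forall M : R, exists N : R, forall x, N <= x -> M <= phi x)].

Definition delta2 (phi : R -> R) : Prop :=
  exists k : R, 0 < k /\ forall x, 0 < x -> phi (2 * x) <= k * phi x.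

Definition weight_function (w : R -> R) : Prop :=
  [/\ (forall t, 0 < t -> 0 < w t),
      (forall s t, 0 < s -> s <= t -> w t <= w s),
      (forall a, 0 < a -> lebesgue_measure.-integrable `]0%R, a]%classic (EFin \o w)) &
      (\int[lebesgue_measure]_(t in (`]0%R, +oo[%classic : set R)) (w t)%:E = +oo)%E].

Context {d : measure_display} {T : measurableType d}.
Variable mu : {measure set T -> \bar R}.

Definition cmeasurable (f : T -> R[i]) : Prop :=
  measurable_fun setT (fun x => complex.Re (f x)) /\
  measurable_fun setT (fun x => complex.Im (f x)).

Definition distribution (f : T -> R[i]) (s : R) : \bar R :=
  mu [set x | s < cmod (f x)].

(* decreasing rearrangement f^*(t) = inf {s > 0 : nu_f(s) <= t} (inf of empty set = +oo) *)
Definition rearrangement (f : T -> R[i]) (t : R) : \bar R :=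
  ereal_inf [set s%:E | s in [set s : R | 0 < s /\ (distribution f s <= t%:E)%E]].

Definition phi_bar (phi : R -> R) (x : \bar R) : \bar R :=
  match x with
  | r%:E => (phi r)%:E
  | +oo%E => +oo%E
  | -oo%E => 0%E
  end.

Definition OL_modular (phi w : R -> R) (f : T -> R[i]) (alpha : R) : \bar R :=
  (\int[lebesgue_measure]_(t in (`]0%R, +oo[%classic : set R))
     (phi_bar phi (alpha%:E * rearrangement f t) * (w t)%:E))%E.

Definition in_OL (phi w : R -> R) (f : T -> R[i]) : Prop :=
  cmeasurable f /\ exists alpha : R, 0 < alpha /\ (OL_modular phi w f alpha < +oo)%E.

Definition nonsingular (Psi : T -> T) : Prop :=
  forall S, measurable S -> mu S = 0%E -> mu (Psi @^-1` S) = 0%E.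

Definition is_RN_derivative (nu : set T -> \bar R) (h : T -> \bar R) : Prop :=
  [/\ measurable_fun [set: T] h, (forall x, 0 <= h x)%E &
      forall S, measurable S -> nu S = (\int[mu]_(x in S) h x)%E].

End OrliczLorentz.

From HB Require Import structures.
From mathcomp Require Import all_boot all_order all_algebra.
From mathcomp Require Import all_classical all_reals all_analysis.
From mathcomp Require Import measurable_realfun.
From mathcomp Require Import complex.
Set Implicit Arguments. Unset Strict Implicit. Unset Printing Implicit Defensive.
Import Order.TTheory GRing.Theory Num.Theory.
Local Open Scope classical_set_scope.
Local Open Scope ring_scope.

(* Only measurability of f is used: f o Psi^m vanishes a.e. iff the support
   N of f is null for nu o Psi^-m, i.e. iff the density f_{Psi^m} integrates
   to 0 over N, i.e. iff f_{Psi^m} = 0 a.e. on N. *)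

Lemma measurable_fun_iter d (T : measurableType d) (Psi : T -> T) (m : nat) :
  measurable_fun setT Psi -> measurable_fun setT (iter m Psi).
Proof.
move=> mPsi; elim: m => [|m IHm] /=; first exact: measurable_id.
exact: measurableT_comp.
Qed.

Lemma cmeasurable_neq0 (R : realType) d (T : measurableType d)
    (f : T -> R[i]) :
  cmeasurable f -> measurable [set x | f x <> 0].
Proof.
move=> [mRe mIm].
have -> : [set x | f x <> 0] = ~` ((fun x => complex.Re (f x)) @^-1` [set 0]
                                  `&` (fun x => complex.Im (f x)) @^-1` [set 0]).
  apply/seteqP; split=> x /=; case: (f x) => a b /=.
    by move=> ab0 [a0 b0]; apply: ab0; rewrite a0 b0.
  by move=> nab0 ab0; apply: nab0; case: ab0 => -> ->.
apply/measurableC/measurableI; rewrite -[X in measurable X]setTI.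
- exact: mRe.
- exact: mIm.
Qed.

Lemma ae_measure0P d (T : semiRingOfSetsType d) (R : realFieldType)
    (mu : {measure set T -> \bar R}) (P : set T) :
  measurable (~` P) -> {ae mu, forall x, P x} <-> mu (~` P) = 0%E.
Proof. exact: negligibleP. Qed.

Lemma RN_derivative_measure0 (R : realType) d (T : measurableType d)
    (mu : {measure set T -> \bar R}) (nu : set T -> \bar R) (h : T -> \bar R)
    (A : set T) :
  is_RN_derivative mu nu h -> measurable A ->
  nu A = 0%E <-> h = cst 0%E %[ae mu in A].
Proof.
move=> [mh h0 nuE] mA; rewrite nuE //.
rewrite (eq_integral (fun x => `|h x|)%E); last by move=> x _; rewrite gee0_abs ?h0.
exact/ae_eq_integral_abs/(measurable_funS measurableT).
Qed.

Theorem theorem3p1 (d : measure_display) (E : measurableType d) (R : realType)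
  (nu : {measure set E -> \bar R}) (phi w : R -> R) (Psi : E -> E)
  (fPsi : nat -> E -> \bar R) :
  sigma_finite setT nu ->
  young_function phi -> delta2 phi -> weight_function w ->
  measurable_fun setT Psi ->
  nonsingular nu Psi ->
  (forall f : E -> R[i], in_OL nu phi w f -> in_OL nu phi w (f \o Psi)) ->
  (forall m : nat,
     is_RN_derivative nu (fun S => nu (iter m Psi @^-1` S)) (fPsi m)) ->
  forall (m : nat) (f : E -> R[i]), in_OL nu phi w f ->
    ({ae nu, forall x, f (iter m Psi x) = 0} <->
     {ae nu, forall x, ~ [set y | fPsi m y = (0%R)%:E] x -> f x = 0}).
Proof.
move=> _ _ _ _ mPsi _ _ RN m f [mf _].
pose N := [set x | f x <> 0].
have mN : measurable N := cmeasurable_neq0 mf.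
have mPsiN : measurable (iter m Psi @^-1` N).
  by rewrite -[X in measurable X]setTI; exact: measurable_fun_iter.
rewrite (ae_measure0P _ (P := [set x | f (iter m Psi x) = 0])) //.
rewrite (RN_derivative_measure0 (RN m) mN).
split; apply: filterS => x fx0 Nx; apply: contrapT.
  by move=> /fx0 /Nx.
by move=> /fx0.
Qed.
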